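(* Every $\mathcal{L}$-definable subset $A$ of $K^{n}$ with an accumulation point $a\in K^{n}$ has, after a permutation of the coordinates, an $\mathcal{L}$-definable $x_{1}$-fiber shrinking at $a$.
   Context: Standing assumptions: $K$ is a Henselian valued field of equicharacteristic zero whose valuation $v:K\to\Gamma\cup\{\infty\}$ has rank one ($\Gamma\subset(\mathbb{R},+)$), with the topology of its absolute value; $\mathcal{L}$ is the three-sorted Denef–Pas language (sorts $K$, $\Gamma$, $\Bbbk$; maps $v$ and an angular component map $\overline{ac}:K\to\Bbbk$, multiplicative, $\overline{ac}(0)=0$, equal to the residue map on units of the valuation ring); definable means definable with parameters. Definition: let $A\subset K^{n}$ be $\mathcal{L}$-definable with accumulation point $a=(a_{1},\ldots,a_{n})$, and let $E\subset K$ be $\mathcal{L}$-definable with accumulation point $a_{1}$. An $\mathcal{L}$-definable family $\Phi=\bigcup_{t\in E}\{t\}\times\Phi_{t}\subset A$ (with $\Phi_t\subset K^{n-1}$) is an $\mathcal{L}$-definable $x_{1}$-fiber shrinking for $A$ at $a$ if for every neighbourhood $U$ of $(a_{2},\ldots,a_{n})$ in $K^{n-1}$ there is a neighbourhood $V$ of $a_{1}$ in $K$ with $\emptyset\neq\Phi_{t}\subset U$ for every $t\in V\cap E$, $t\neq a_{1}$. (For $n=1$, $A$ itself is an $x_1$-fiber shrinking.) *)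

From Stdlib Require Import Reals.
From HB Require Import structures.
From mathcomp Require Import all_boot all_order all_algebra all_fingroup.
Set Implicit Arguments. Unset Strict Implicit. Unset Printing Implicit Defensive.
Import GRing.Theory.
Local Open Scope ring_scope.

(** * Gamma u {oo} as [option R]  (None = oo) *)
Definition Gadd (a b : option R) : option R :=
  match a, b with Some x, Some y => Some (Rplus x y) | _, _ => None end.
Definition Glt (a b : option R) : Prop :=
  match a, b with
  | Some x, Some y => Rlt x y
  | Some _, None => True
  | None, _ => False
  end.
Definition Gle (a b : option R) : Prop := Glt a b \/ a = b.

(** * Henselian, equicharacteristic zero, rank one valued field with an
      angular component map (the structure interpreting the Denef-Pas
      language).  [v : K -> Gamma u {oo}] with Gamma a subgroup of (R,+);
      [res] is the residue map of the valuation ring onto the residue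
      field [k] (its values outside the valuation ring are irrelevant);
      [ac] is the angular component map. *)
Record DPField (K k : fieldType) (v : K -> option R) (res ac : K -> k) : Prop := {
  val_inf : forall x, v x = None <-> x = 0;
  val_mul : forall x y, v (x * y) = Gadd (v x) (v y);
  val_add : forall x y, Gle (v x) (v (x + y)) \/ Gle (v y) (v (x + y));
  (* rank one: the value group is a nontrivial subgroup of R *)
  val_nontriv : exists x, v x <> None /\ v x <> Some R0;
  res_add : forall x y, Gle (Some R0) (v x) -> Gle (Some R0) (v y) ->
              res (x + y) = res x + res y;
  res_mul : forall x y, Gle (Some R0) (v x) -> Gle (Some R0) (v y) ->
              res (x * y) = res x * res y;
  res_one : res 1 = 1;
  res_ker : forall x, Gle (Some R0) (v x) -> (res x = 0 <-> Glt (Some R0) (v x));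
  res_surj : forall c : k, exists x, Gle (Some R0) (v x) /\ res x = c;
  charK0 : forall m : nat, (m.+1)%:R != 0 :> K;
  chark0 : forall m : nat, (m.+1)%:R != 0 :> k;
  henselian : forall (p : {poly K}) (a : K),
      p \is monic -> (forall i, Gle (Some R0) (v p`_i)) ->
      Gle (Some R0) (v a) -> Glt (Some R0) (v p.[a]) ->
      v (p^`()).[a] = Some R0 ->
      exists b, Gle (Some R0) (v b) /\ p.[b] = 0 /\ Glt (Some R0) (v (b - a));
  ac_mul : forall x y, ac (x * y) = ac x * ac y;
  ac_zero : ac 0 = 0;
  ac_unit : forall x, v x = Some R0 -> ac x = res x
}.

Section Lang.
Variables (K k : fieldType).

Inductive termK : Type :=
  | KVar of nat | KPar of K | KAdd of termK & termK | KMul of termK & termK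
  | KNeg of termK.

(* value-group sort terms (sort Gamma u {oo}); parameters of this sort are
   the values [GVal (KPar c)] *)
Inductive termG : Type :=
  | GVar of nat | GVal of termK | GAdd of termG & termG.

Inductive termk : Type :=
  | kVar of nat | kPar of k | kAc of termK | kAdd of termk & termk
  | kMul of termk & termk | kNeg of termk.

Inductive formula : Type :=
  | FEqK of termK & termK
  | FEqG of termG & termG
  | FLtG of termG & termG
  | FEqk of termk & termk
  | FNot of formula
  | FAnd of formula & formula
  | FExK of nat & formula
  | FExG of nat & formula
  | FExk of nat & formula.

Variables (v : K -> option R) (ac : K -> k).

Fixpoint evalK (eK : nat -> K) (t : termK) : K :=
  match t with
  | KVar i => eK i
  | KPar c => c
  | KAdd t1 t2 => evalK eK t1 + evalK eK t2
  | KMul t1 t2 => evalK eK t1 * evalK eK t2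
  | KNeg t1 => - evalK eK t1
  end.

Fixpoint evalG (eK : nat -> K) (eG : nat -> option R) (t : termG) : option R :=
  match t with
  | GVar i => eG i
  | GVal s => v (evalK eK s)
  | GAdd t1 t2 => Gadd (evalG eK eG t1) (evalG eK eG t2)
  end.

Fixpoint evalk (eK : nat -> K) (ek : nat -> k) (t : termk) : k :=
  match t with
  | kVar i => ek i
  | kPar c => c
  | kAc s => ac (evalK eK s)
  | kAdd t1 t2 => evalk eK ek t1 + evalk eK ek t2
  | kMul t1 t2 => evalk eK ek t1 * evalk eK ek t2
  | kNeg t1 => - evalk eK ek t1
  end.

Definition upd {T : Type} (e : nat -> T) (i : nat) (x : T) : nat -> T :=
  fun j => if j == i then x else e j.

Fixpoint sat (eK : nat -> K) (eG : nat -> option R) (ek : nat -> k)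
    (f : formula) : Prop :=
  match f with
  | FEqK t1 t2 => evalK eK t1 = evalK eK t2
  | FEqG t1 t2 => evalG eK eG t1 = evalG eK eG t2
  | FLtG t1 t2 => Glt (evalG eK eG t1) (evalG eK eG t2)
  | FEqk t1 t2 => evalk eK ek t1 = evalk eK ek t2
  | FNot g => ~ sat eK eG ek g
  | FAnd g h => sat eK eG ek g /\ sat eK eG ek h
  | FExK i g => exists x : K, sat (upd eK i x) eG ek g
  (* the Gamma u {oo} sort is the image of v *)
  | FExG i g => exists x : K, sat eK (upd eG i (v x)) ek g
  | FExk i g => exists c : k, sat eK eG (upd ek i c) g
  end.

(* a point of K^n as an environment: variable i < n is x_i; the remaining
   variables are set to the (definable) constants 0, oo, 0 *)
Definition env_of (n : nat) (x : 'I_n -> K) : nat -> K :=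
  fun i => match (insub i : option 'I_n) with Some j => x j | None => 0 end.

Definition definable (n : nat) (A : ('I_n -> K) -> Prop) : Prop :=
  exists f : formula, forall x : 'I_n -> K,
    A x <-> sat (env_of x) (fun _ => None) (fun _ => 0) f.

(** topology of the absolute value |x| = exp(-v x) on K^n (max norm) *)
Definition ball (n : nat) (p : 'I_n -> K) (r : R) (y : 'I_n -> K) : Prop :=
  forall i, Glt (Some r) (v (y i - p i)).

Definition nbhd (n : nat) (p : 'I_n -> K) (U : ('I_n -> K) -> Prop) : Prop :=
  exists r : R, forall y, ball p r y -> U y.

Definition accumulation (n : nat) (A : ('I_n -> K) -> Prop) (a : 'I_n -> K) : Prop :=
  forall U, nbhd a U -> exists x, A x /\ x <> a /\ U x.

Definition pt1 (t : K) : 'I_1 -> K := fun _ => t.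

Definition tail (m : nat) (x : 'I_m.+1 -> K) : 'I_m -> K :=
  fun i => x (lift ord0 i).

(** An L-definable x_1-fiber shrinking for A at a: a definable E <= K with
    accumulation point a_1 and a definable Phi <= A lying over E
    (Phi = U_{t in E} {t} x Phi_t, Phi_t = {tail x | x in Phi, x_1 = t}),
    such that for every neighbourhood U of (a_2..a_n) there is a
    neighbourhood V of a_1 with  {} <> Phi_t <= U  for t in V n E, t <> a_1. *)
Definition fiber_shrinking (m : nat) (A : ('I_m.+1 -> K) -> Prop)
    (a : 'I_m.+1 -> K) (E : K -> Prop) (Phi : ('I_m.+1 -> K) -> Prop) : Prop :=
  definable (fun y : 'I_1 -> K => E (y ord0)) /\
  accumulation (fun y : 'I_1 -> K => E (y ord0)) (pt1 (a ord0)) /\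
  definable Phi /\
  (forall x, Phi x -> A x) /\
  (forall x, Phi x -> E (x ord0)) /\
  (forall U, nbhd (tail a) U ->
     exists V, nbhd (pt1 (a ord0)) V /\
       forall t, V (pt1 t) -> E t -> t <> a ord0 ->
         (exists x, Phi x /\ x ord0 = t) /\
         (forall x, Phi x -> x ord0 = t -> U (tail x))).

End Lang.

From Stdlib Require Import Reals.
From HB Require Import structures.
From mathcomp Require Import all_boot all_order all_algebra all_fingroup.
From Stdlib Require Import Classical FunctionalExtensionality Lra.
Import GRing.Theory.

Set Implicit Arguments.
Unset Strict Implicit.
Unset Printing Implicit Defensive.

(* Along any approach to [a] inside [A], some coordinate [j] is, for points
   arbitrarily close to [a], a coordinate of maximal distance to [a] (finitely
   many coordinates, infinitely many radii).  Move [j] to the front and let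
   [Phi] be the points of [A] whose first coordinate is such a farthest one;
   then the fiber of [Phi] over [t] lies in the ball of radius |t - a_1|
   around the tail of [a], so the fibers shrink.  [Phi] and its projection
   [E] are definable because "v(x_1 - a_1) <= v(x_i - a_i) for all i" is a
   finite conjunction of atomic formulas. *)

Lemma Gle_refl a : Gle a a.
Proof. by right. Qed.

Lemma Gle_total a b : Gle a b \/ Gle b a.
Proof.
case: a => [x|]; case: b => [y|]; rewrite /Gle /Glt; auto.
by case: (total_order_T x y) => [[H|->]|H]; auto.
Qed.

Lemma Glt_Gle_trans a b c : Glt a b -> Gle b c -> Glt a c.
Proof.
move=> ltab [ltbc|<-] //; move: ltab ltbc.
by case: a => [x|]; case: b => [y|]; case: c => [z|] //=; lra.
Qed.

Lemma Gle_trans a b c : Gle a b -> Gle b c -> Gle a c.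
Proof. by move=> [ltab|<-] // lebc; left; apply: Glt_Gle_trans lebc. Qed.

Lemma Glt_Some_le (r r' : R) z : Rle r' r -> Glt (Some r) z -> Glt (Some r') z.
Proof. by case: z => [w|] //= ? ?; lra. Qed.

Lemma Gle_argmin (T : eqType) (f : T -> option R) (x0 : T) (l : seq T) :
  exists2 j, j \in x0 :: l & forall i, i \in x0 :: l -> Gle (f j) (f i).
Proof.
elim: l x0 => [|x1 l IH] x0.
  by exists x0 => [|i]; rewrite ?inE // => /eqP ->; apply: Gle_refl.
have [j jl minj] := IH x1.
have [le0j|lej0] := Gle_total (f x0) (f j).
  exists x0 => [|i]; first exact: mem_head.
  rewrite inE => /orP[/eqP ->|/minj]; [exact: Gle_refl|exact: Gle_trans].
exists j => [|i]; first by rewrite inE jl orbT.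
by rewrite inE => /orP[/eqP ->|/minj].
Qed.

Lemma Gle_argmin_ord m (f : 'I_m.+1 -> option R) :
  exists j, forall i, Gle (f j) (f i).
Proof.
have [j _ minj] := Gle_argmin f ord0 (ord_enum m.+1).
by exists j => i; apply: minj; rewrite inE mem_ord_enum orbT.
Qed.

Section Syntax.
Variables (K k : fieldType) (v : K -> option R) (ac : K -> k).
Local Open Scope ring_scope.

Fixpoint renK (p : nat -> nat) (t : termK K) : termK K :=
  match t with
  | KVar i => KVar K (p i)
  | KPar c => KPar c
  | KAdd a b => KAdd (renK p a) (renK p b)
  | KMul a b => KMul (renK p a) (renK p b)
  | KNeg a => KNeg (renK p a)
  end.

Fixpoint renG (p : nat -> nat) (t : termG K) : termG K :=
  match t with
  | GVar i => GVar K i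
  | GVal s => GVal (renK p s)
  | GAdd a b => GAdd (renG p a) (renG p b)
  end.

Fixpoint renk (p : nat -> nat) (t : termk K k) : termk K k :=
  match t with
  | kVar i => kVar K k i
  | kPar c => kPar K c
  | kAc s => kAc k (renK p s)
  | kAdd a b => kAdd (renk p a) (renk p b)
  | kMul a b => kMul (renk p a) (renk p b)
  | kNeg a => kNeg (renk p a)
  end.

(* Only the valued-field variables are renamed. *)
Fixpoint renF (p : nat -> nat) (f : formula K k) : formula K k :=
  match f with
  | FEqK a b => FEqK k (renK p a) (renK p b)
  | FEqG a b => FEqG k (renG p a) (renG p b)
  | FLtG a b => FLtG k (renG p a) (renG p b)
  | FEqk a b => FEqk (renk p a) (renk p b)
  | FNot g => FNot (renF p g)
  | FAnd g h => FAnd (renF p g) (renF p h)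
  | FExK i g => FExK (p i) (renF p g)
  | FExG i g => FExG i (renF p g)
  | FExk i g => FExk i (renF p g)
  end.

Lemma evalK_ren p eK t : evalK eK (renK p t) = evalK (eK \o p) t.
Proof. by elim: t => //= [a -> b ->|a -> b ->|a ->]. Qed.

Lemma evalG_ren p eK eG t : evalG v eK eG (renG p t) = evalG v (eK \o p) eG t.
Proof. by elim: t => //= [s|a -> b ->]; rewrite ?evalK_ren. Qed.

Lemma evalk_ren p eK ek t : evalk ac eK ek (renk p t) = evalk ac (eK \o p) ek t.
Proof. by elim: t => //= [s|a -> b ->|a -> b ->|a ->]; rewrite ?evalK_ren. Qed.

Lemma upd_comp_inj (p : nat -> nat) (eK : nat -> K) i x : injective p ->
  upd eK (p i) x \o p = upd (eK \o p) i x.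
Proof.
by move=> p_inj; apply: functional_extensionality => j; rewrite /upd /= (inj_eq p_inj).
Qed.

Lemma sat_ren p f eK eG ek : injective p ->
  sat v ac eK eG ek (renF p f) <-> sat v ac (eK \o p) eG ek f.
Proof.
move=> p_inj; elim: f eK eG ek
  => [a b|a b|a b|a b|g IH|g IHg h IHh|i g IH|i g IH|i g IH] eK eG ek /=.
- by rewrite !evalK_ren.
- by rewrite !evalG_ren.
- by rewrite !evalG_ren.
- by rewrite !evalk_ren.
- by rewrite IH.
- by rewrite IHg IHh.
- by split=> -[x sx]; exists x; move: sx; rewrite IH upd_comp_inj.
- by split=> -[x sx]; exists x; move: sx; rewrite IH.
- by split=> -[x sx]; exists x; move: sx; rewrite IH.
Qed.

Lemma sat_exK (l : seq nat) g eK eG ek :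
  sat v ac eK eG ek (foldr (@FExK K k) g l) <->
  exists w : nat -> K, sat v ac (fun j => if j \in l then w j else eK j) eG ek g.
Proof.
elim: l eK => [|i l IH] eK /=.
  split=> [sg|[w]]; first by exists (fun _ => 0).
  by congr (sat _ _ _ _ _ _); apply: functional_extensionality.
split=> [[x /IH [w sw]]|[w sw]].
  exists (fun j => if j \in l then w j else x); move: sw.
  congr (sat _ _ _ _ _ _); apply: functional_extensionality => j.
  by rewrite inE /upd; case: (j \in l); rewrite ?orbT ?orbF //; case: (j == i).
exists (w i); apply/IH; exists w; move: sw.
congr (sat _ _ _ _ _ _); apply: functional_extensionality => j.
by rewrite inE /upd; case: (j \in l); rewrite ?orbT ?orbF //; case: eqP => [->|].
Qed.

Fixpoint bigAndF (c : nat -> formula K k) (m : nat) : formula K k :=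
  match m with
  | O => FEqK k (KPar 0) (KPar 0)
  | S m' => FAnd (bigAndF c m') (c m')
  end.

Lemma sat_bigAndF c m eK eG ek :
  sat v ac eK eG ek (bigAndF c m) <-> forall i, (i < m)%N -> sat v ac eK eG ek (c i).
Proof.
elim: m => [|m IH] /=; first by [].
rewrite IH; split=> [[sc scm] i|sc].
  by rewrite ltnS leq_eqVlt => /orP[/eqP ->|/sc].
by split=> [i lt_im|]; apply: sc; rewrite // ltnS ltnW.
Qed.

Definition leF (c : nat -> K) (j i : nat) : formula K k :=
  let gj := GVal (KAdd (KVar K j) (KNeg (KPar (c j)))) in
  let gi := GVal (KAdd (KVar K i) (KNeg (KPar (c i)))) in
  FNot (FAnd (FNot (FLtG k gj gi)) (FNot (FEqG k gj gi))).

Lemma sat_leF c j i eK eG ek :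
  sat v ac eK eG ek (leF c j i) <-> Gle (v (eK j - c j)) (v (eK i - c i)).
Proof.
rewrite /leF /= /Gle; split=> [nle|[lt|eq] []] //.
by apply: NNPP => ngle; apply: nle; split=> ?; apply: ngle; auto.
Qed.

End Syntax.

Section Definability.
Variables (K k : fieldType) (v : K -> option R) (ac : K -> k).
Local Open Scope ring_scope.

Lemma env_of_val m (x : 'I_m -> K) (j : 'I_m) : env_of x (val j) = x j.
Proof. by rewrite /env_of valK. Qed.

Lemma env_of_ge m (x : 'I_m -> K) i : (m <= i)%N -> env_of x i = 0.
Proof. by move=> le_mi; rewrite /env_of insubF // ltnNge le_mi. Qed.

Definition perm_nat m (s : {perm 'I_m}) (i : nat) : nat :=
  if (insub i : option 'I_m) is Some j then val (s j) else i.

Lemma perm_nat_val m (s : {perm 'I_m}) (j : 'I_m) : perm_nat s (val j) = val (s j).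
Proof. by rewrite /perm_nat valK. Qed.

Lemma perm_nat_ge m (s : {perm 'I_m}) i : (m <= i)%N -> perm_nat s i = i.
Proof. by move=> le_mi; rewrite /perm_nat insubF // ltnNge le_mi. Qed.

Lemma perm_natK m (s : {perm 'I_m}) : cancel (perm_nat s) (perm_nat s^-1).
Proof.
move=> i; case: (ltnP i m) => [lt_im|le_mi]; last by rewrite !perm_nat_ge.
by rewrite -[i]/(val (Ordinal lt_im)) !perm_nat_val permK.
Qed.

Lemma env_of_perm m (s : {perm 'I_m}) (x : 'I_m -> K) :
  env_of x \o perm_nat s = env_of (fun i => x (s i)).
Proof.
apply: functional_extensionality => i /=.
case: (ltnP i m) => [lt_im|le_mi]; last by rewrite perm_nat_ge ?env_of_ge.
by rewrite -[i]/(val (Ordinal lt_im)) perm_nat_val !env_of_val.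
Qed.

Lemma definable_perm m (s : {perm 'I_m}) (A : ('I_m -> K) -> Prop) :
  definable v ac A -> definable v ac (fun x => A (fun i => x (s i))).
Proof.
move=> [f defA]; exists (renF (perm_nat s) f) => x.
by rewrite sat_ren ?env_of_perm -?defA //; apply: can_inj (perm_natK s).
Qed.

Lemma definable_And m (A B : ('I_m -> K) -> Prop) :
  definable v ac A -> definable v ac B -> definable v ac (fun x => A x /\ B x).
Proof.
by move=> [f defA] [g defB]; exists (FAnd f g) => x /=; rewrite -defA -defB.
Qed.

Definition dominant m (c : 'I_m -> K) (j : 'I_m) (x : 'I_m -> K) : Prop :=
  forall i, Gle (v (x j - c j)) (v (x i - c i)).

Lemma definable_dominant m (c : 'I_m -> K) (j : 'I_m) :
  definable v ac (dominant c j).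
Proof.
exists (bigAndF (leF k (env_of c) (val j)) m) => x; rewrite sat_bigAndF.
split=> [domx i lt_im|domx i].
  by apply/sat_leF; rewrite -[i]/(val (Ordinal lt_im)) !env_of_val.
by have /sat_leF := domx _ (ltn_ord i); rewrite !env_of_val.
Qed.

Lemma env_of0 m (x : 'I_m.+1 -> K) : env_of x 0 = x ord0.
Proof. exact: env_of_val x ord0. Qed.

Lemma env_of_head_tail m (y : 'I_1 -> K) (x : 'I_m.+1 -> K) (w : nat -> K) :
  x ord0 = y ord0 -> (forall i : 'I_m.+1, val i != 0%N -> x i = w i) ->
  (fun j => if j \in iota 1 m then w j else env_of y j) = env_of x.
Proof.
move=> x0 xw; apply: functional_extensionality => j; rewrite mem_iota add1n.
case: j => [|j] /=; first by rewrite !env_of0 x0.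
rewrite ltnS; case: (ltnP j m) => [lt_jm|le_mj]; last by rewrite !env_of_ge // ltnS.
by rewrite -[j.+1]/(val (Ordinal (lt_jm : (j.+1 < m.+1)%N))) env_of_val xw.
Qed.

Lemma definable_proj_head m (B : ('I_m.+1 -> K) -> Prop) :
  definable v ac B ->
  definable v ac (fun y : 'I_1 -> K => exists x, B x /\ x ord0 = y ord0).
Proof.
move=> [f defB]; exists (foldr (@FExK K k) f (iota 1 m)) => y; rewrite sat_exK.
split=> [[x [Bx x0]]|[w sw]].
  by exists (env_of x); rewrite (env_of_head_tail x0) -?defB // => i _; rewrite env_of_val.
pose x (i : 'I_m.+1) := if val i == 0%N then y ord0 else w i.
exists x; split; last by rewrite /x eqxx.
apply/defB; rewrite -(@env_of_head_tail _ y x w) // => i /negbTE i0.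
by rewrite /x i0.
Qed.

End Definability.

Section FiberShrinking.
Variables (K k : fieldType) (v : K -> option R) (ac : K -> k).
Local Open Scope ring_scope.
Hypothesis v_eq_None : forall x, v x = None <-> x = 0.

Lemma ball_mono m (a x : 'I_m -> K) (r r' : R) :
  Rle r r' -> ball v a r' x -> ball v a r x.
Proof. by move=> le_rr' bx i; apply: Glt_Some_le le_rr' (bx i). Qed.

Lemma exists_common_radius (T : eqType) (P : T -> R -> Prop) (l : seq T) :
  (forall j r r', Rle r r' -> P j r' -> P j r) ->
  (forall j, exists r, ~ P j r) ->
  exists r, forall j, j \in l -> ~ P j r.
Proof.
move=> P_mono notP; elim: l => [|j l [r nPr]]; first by exists R0.
have [rj nPj] := notP j.
exists (Rmax rj r) => i; rewrite inE => /orP[/eqP ->|/nPr nPi] P_max.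
  by apply: nPj; apply: P_mono (Rmax_l _ _) P_max.
by apply: nPi; apply: P_mono (Rmax_r _ _) P_max.
Qed.

Lemma accumulation_dominant m (A : ('I_m.+1 -> K) -> Prop) a :
  accumulation v A a -> exists j, forall r, exists x,
    A x /\ x <> a /\ ball v a r x /\ dominant v a j x.
Proof.
move=> accA; apply: NNPP => no_j.
pose P j r := exists x, A x /\ x <> a /\ ball v a r x /\ dominant v a j x.
have P_mono j r r' : Rle r r' -> P j r' -> P j r.
  move=> le_rr' [x [Ax [xa [bx dx]]]].
  by exists x; do !split => //; apply: ball_mono le_rr' bx.
have notP j : exists r, ~ P j r.
  by apply: NNPP => allP; apply: no_j; exists j => r; apply: NNPP => nP; apply: allP; exists r.
have [r nP] := exists_common_radius (ord_enum m.+1) P_mono notP.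
have [x [Ax [xa bx]]] := accA (ball v a r) (ex_intro _ r (fun y by_ => by_)).
have [j minj] := Gle_argmin_ord (fun i => v (x i - a i)).
by apply: (nP j (mem_ord_enum _)); exists x.
Qed.

Lemma dominant_neq m (a x : 'I_m -> K) j :
  dominant v a j x -> x <> a -> x j <> a j.
Proof.
move=> domx xa xja; apply: xa; apply: functional_extensionality => i.
have vj : v (x j - a j) = None by apply/v_eq_None; rewrite xja subrr.
move: (domx i); rewrite vj => -[//|/esym/v_eq_None/eqP].
by rewrite subr_eq0 => /eqP.
Qed.

Lemma fiber_shrinking_dominant m (B : ('I_m.+1 -> K) -> Prop) (a : 'I_m.+1 -> K) :
  definable v ac B ->
  (forall r, exists x, B x /\ x <> a /\ ball v a r x /\ dominant v a ord0 x) ->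
  exists E Phi, fiber_shrinking v ac B a E Phi.
Proof.
move=> defB near_a.
pose Phi x := B x /\ dominant v a ord0 x.
have defPhi : definable v ac Phi by apply/definable_And/definable_dominant.
exists (fun t => exists x, Phi x /\ x ord0 = t), Phi.
split; first exact: definable_proj_head.
split.
  move=> U [r ballU]; have [x [Bx [xa [bx domx]]]] := near_a r.
  exists (pt1 (x ord0)); split; first by exists x.
  split; last by apply: ballU => i; apply: bx.
  by move=> /(congr1 (fun y => y ord0)); apply: dominant_neq domx xa.
split; first exact: defPhi.
split; first by move=> x [].
split; first by move=> x Phix; exists x.
move=> U [r ballU]; exists (ball v (pt1 (a ord0)) r); split; first by exists r.
move=> t bt [y [Phiy y0]] ta; split; first by exists y.
move=> x [_ domx] x0; apply: ballU => i; rewrite /tail.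
by apply: Glt_Gle_trans (domx (lift ord0 i)); rewrite x0; apply: bt ord0.
Qed.

End FiberShrinking.

Theorem proposition6p1 (K k : fieldType) (v : K -> option R) (res ac : K -> k)
  (HK : DPField v res ac) (n : nat)
  (A : ('I_n.+1 -> K) -> Prop) (a : 'I_n.+1 -> K) :
  definable v ac A -> accumulation v A a ->
  exists s : {perm 'I_n.+1},
    exists (E : K -> Prop) (Phi : ('I_n.+1 -> K) -> Prop),
      fiber_shrinking v ac
        (fun y : 'I_n.+1 -> K => A (fun i => y ((s^-1)%g i)))
        (fun i => a (s i)) E Phi.
Proof.
move=> defA accA.
have [J nearJ] := accumulation_dominant accA.
pose s := tperm ord0 J; exists s.
apply: (fiber_shrinking_dominant (val_inf HK)); first exact: definable_perm.
move=> r; have [x [Ax [xa [bx domx]]]] := nearJ r.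
exists (fun i => x (s i)); split; [|split; [|split]].
- by rewrite (_ : (fun i => _) = x) //; apply: functional_extensionality => i; rewrite permKV.
- move=> xsa; apply: xa; apply: functional_extensionality => i.
  by have := congr1 (fun y => y ((s^-1)%g i)) xsa; rewrite /= permKV.
- by move=> i; apply: bx.
- by move=> i; rewrite /s tpermL; apply: domx.
Qed.
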